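(* Let $\mathcal A_1=(A,\to_{\mathcal A_1})$ and $\mathcal A_2=(A,\to_{\mathcal A_2})$ be ARSs on the same set $A$ and $\sim$ an equivalence relation on $A$. Suppose $\mathrm{NF}(\mathcal A_2)\subseteq\mathrm{NF}(\mathcal A_1)$ and $\to_{\mathcal A_2}\subseteq(\sim\cdot\to_{\mathcal A_1}\cdot\sim)^+$. If $\mathcal A_1$ is complete modulo $\sim$, then $\mathcal A_2$ is complete modulo $\sim$ and normalization equivalent modulo $\sim$ to $\mathcal A_1$.
   Context: $\mathrm{NF}(\mathcal A)$ is the set of normal forms of $\mathcal A$. $a\to^!_{\mathcal A}b$ means $a\to^*_{\mathcal A}b$ and $b\in\mathrm{NF}(\mathcal A)$. $\mathcal A$ is terminating modulo $\sim$ if $\sim\cdot\to_{\mathcal A}\cdot\sim$ admits no infinite sequence; Church–Rosser modulo $\sim$ if $(\leftarrow_{\mathcal A}\cup\to_{\mathcal A}\cup\sim)^*\subseteq\to^*_{\mathcal A}\cdot\sim\cdot\leftarrow^*_{\mathcal A}$; complete modulo $\sim$ if both. Normalization equivalent modulo $\sim$: $\to^!_{\mathcal A_1}\cdot\sim\;=\;\to^!_{\mathcal A_2}\cdot\sim$. *)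

From Stdlib Require Import Relations.

Set Implicit Arguments.

Definition rcomp {A : Type} (R S : relation A) : relation A :=
  fun a c => exists b, R a b /\ S b c.

Definition rinv {A : Type} (R : relation A) : relation A := fun a b => R b a.

Definition runion {A : Type} (R S : relation A) : relation A :=
  fun a b => R a b \/ S a b.

Definition rincl {A : Type} (R S : relation A) : Prop :=
  forall a b, R a b -> S a b.

Definition NF {A : Type} (R : relation A) (a : A) : Prop := ~ exists b, R a b.

Definition normalizes {A : Type} (R : relation A) (a b : A) : Prop :=
  clos_refl_trans A R a b /\ NF R b.

Definition rel_mod {A : Type} (R E : relation A) : relation A :=
  rcomp E (rcomp R E).

Definition terminating_mod {A : Type} (R E : relation A) : Prop :=
  ~ exists f : nat -> A, forall n, rel_mod R E (f n) (f (S n)).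

Definition CR_mod {A : Type} (R E : relation A) : Prop :=
  rincl (clos_refl_trans A (runion (rinv R) (runion R E)))
        (rcomp (clos_refl_trans A R) (rcomp E (rinv (clos_refl_trans A R)))).

Definition complete_mod {A : Type} (R E : relation A) : Prop :=
  terminating_mod R E /\ CR_mod R E.

Definition NE_mod {A : Type} (R1 R2 E : relation A) : Prop :=
  forall a b, rcomp (normalizes R1) E a b <-> rcomp (normalizes R2) E a b.

(** Every [R2]-step is a nonempty chain of [~ . R1 . ~]-steps, so an infinite
    [~ . R2 . ~]-chain would yield an infinite [~ . R1 . ~]-chain; hence [R2]
    terminates modulo [~], and so does plain [R2]. Convertibility by [R2] and [~]
    implies convertibility by [R1] and [~]. Two elements that are [R2]-convertible
    modulo [~] therefore have [R2]-normal forms that are also [R1]-normal and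
    [R1]-convertible, so they are [~]-equivalent by the Church-Rosser property of
    [R1]. The same argument applied to an [R1]-normal form and an [R2]-normal form
    of one element gives normalization equivalence. *)

From Stdlib Require Import Relations Wellfounded Classical ClassicalEpsilon.

Set Implicit Arguments.

Section WellFoundedness.
Variable A : Type.

Lemma wf_transp_of_no_infinite_chain (T : relation A) :
  (~ exists f : nat -> A, forall n, T (f n) (f (S n))) -> well_founded (transp A T).
Proof.
  intros no_chain x. apply NNPP; intro not_acc. apply no_chain.
  set (Q := fun z => ~ Acc (transp A T) z).
  assert (step : forall z : {z | Q z}, {y : {z | Q z} | T (proj1_sig z) (proj1_sig y)}).
  { intros [z Qz].
    assert (exists y, T z y /\ Q y) as Hy.
    { apply NNPP; intro N. apply Qz. constructor. intros y Ty.
      apply NNPP; intro Qy. apply N. exists y. split; assumption. }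
    destruct (constructive_indefinite_description _ Hy) as [y [Ty Qy]].
    exists (exist _ y Qy). exact Ty. }
  exists (fun n => proj1_sig (Nat.iter n (fun s => proj1_sig (step s)) (exist Q x not_acc))).
  intro n. exact (proj2_sig (step _)).
Qed.

Lemma no_infinite_chain_of_wf_transp (T : relation A) :
  well_founded (transp A T) -> ~ exists f : nat -> A, forall n, T (f n) (f (S n)).
Proof.
  intros W [f Hf].
  assert (not_in_chain : forall x, Acc (transp A T) x -> forall n, x <> f n).
  { intros x Ax. induction Ax as [x _ IH]. intros n ->.
    exact (IH (f (S n)) (Hf n) (S n) eq_refl). }
  exact (not_in_chain (f 0) (W _) 0 eq_refl).
Qed.

Lemma normalizes_exists (R : relation A) :
  well_founded (transp A R) -> forall a, exists b, normalizes R a b.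
Proof.
  intros W a. induction (W a) as [a _ IH].
  destruct (classic (NF R a)) as [Na | Ra].
  - exists a. split; [apply rt_refl | exact Na].
  - apply NNPP in Ra as [b Rab]. destruct (IH b Rab) as [n [Rbn Nn]].
    exists n. split; [eapply rt_trans; [apply rt_step; exact Rab | exact Rbn] | exact Nn].
Qed.

Lemma NF_rt_eq (R : relation A) x y : NF R x -> clos_refl_trans A R x y -> x = y.
Proof.
  intros Nx Hxy. apply clos_rt_rt1n in Hxy. destruct Hxy as [| y z Rxy _]; [reflexivity |].
  exfalso; apply Nx; exists y; exact Rxy.
Qed.

End WellFoundedness.

Section Modulo.
Variables (A : Type) (E : relation A).
Hypotheses (E_refl : reflexive A E) (E_sym : symmetric A E) (E_trans : transitive A E).

Definition conv_mod (R : relation A) : relation A :=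
  clos_refl_trans A (runion (rinv R) (runion R E)).

Lemma conv_mod_sym (R : relation A) a b : conv_mod R a b -> conv_mod R b a.
Proof.
  induction 1 as [a b [Rba | [Rab | Eab]] | | a b c _ IHab _ IHbc].
  - apply rt_step; right; left; exact Rba.
  - apply rt_step; left; exact Rab.
  - apply rt_step; right; right; apply E_sym; exact Eab.
  - apply rt_refl.
  - eapply rt_trans; eauto.
Qed.

Lemma conv_mod_rt (R : relation A) a b : clos_refl_trans A R a b -> conv_mod R a b.
Proof.
  induction 1; [apply rt_step; right; left; assumption | apply rt_refl | eapply rt_trans; eauto].
Qed.

Lemma conv_mod_of_rel_mod_plus (R : relation A) a b :
  clos_trans A (rel_mod R E) a b -> conv_mod R a b.
Proof.
  induction 1 as [a b [x [Eax [y [Rxy Eyb]]]] | a b c _ IHab _ IHbc].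
  - apply rt_trans with x; [apply rt_step; right; right; exact Eax |].
    apply rt_trans with y; apply rt_step; right; [left; exact Rxy | right; exact Eyb].
  - eapply rt_trans; eauto.
Qed.

Lemma conv_mod_incl (R1 R2 : relation A) :
  rincl R2 (conv_mod R1) -> rincl (conv_mod R2) (conv_mod R1).
Proof.
  intros incl a b. induction 1 as [a b [Rba | [Rab | Eab]] | | a b c _ IHab _ IHbc].
  - apply conv_mod_sym, incl, Rba.
  - apply incl, Rab.
  - apply rt_step; right; right; exact Eab.
  - apply rt_refl.
  - eapply rt_trans; eauto.
Qed.

Lemma CR_mod_NF_E (R : relation A) a b :
  CR_mod R E -> NF R a -> NF R b -> conv_mod R a b -> E a b.
Proof.
  intros CR Na Nb Hab. destruct (CR a b Hab) as [c [Rac [d [Ecd Rbd]]]].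
  apply NF_rt_eq in Rac; [| exact Na]. apply NF_rt_eq in Rbd; [| exact Nb].
  subst; exact Ecd.
Qed.

Lemma rel_mod_plus_E_l (R : relation A) a b c :
  E a b -> clos_trans A (rel_mod R E) b c -> clos_trans A (rel_mod R E) a c.
Proof.
  intros Eab Hbc. revert a Eab.
  induction Hbc as [b c [x [Ebx Rxc]] | b c d _ IHbc Hcd _]; intros a Eab.
  - apply t_step. exists x; split; [eapply E_trans; eauto | exact Rxc].
  - eapply t_trans; [apply IHbc; exact Eab | exact Hcd].
Qed.

Lemma rel_mod_plus_E_r (R : relation A) a b c :
  clos_trans A (rel_mod R E) a b -> E b c -> clos_trans A (rel_mod R E) a c.
Proof.
  intros Hab Ebc. revert c Ebc.
  induction Hab as [a b [x [Eax [y [Rxy Eyb]]]] | a b d Hab _ _ IHbd]; intros c Ebc.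
  - apply t_step. exists x; split; [exact Eax |].
    exists y; split; [exact Rxy | eapply E_trans; eauto].
  - eapply t_trans; [exact Hab | apply IHbd; exact Ebc].
Qed.

(* [~ . R2 . ~ ⊆ (~ . R1 . ~)^+] because [E] is absorbed at both ends of a chain. *)
Lemma terminating_mod_incl (R1 R2 : relation A) :
  rincl R2 (clos_trans A (rel_mod R1 E)) -> terminating_mod R1 E -> terminating_mod R2 E.
Proof.
  intros incl T1. apply no_infinite_chain_of_wf_transp.
  apply wf_incl with (transp A (clos_trans A (rel_mod R1 E))).
  - intros y x [u [Exu [v [Ruv Evy]]]].
    apply rel_mod_plus_E_r with v; [apply rel_mod_plus_E_l with u, incl |]; assumption.
  - apply wf_incl with (clos_trans A (transp A (rel_mod R1 E))).
    + intros x y. apply clos_trans_transp_permute.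
    + apply wf_clos_trans, wf_transp_of_no_infinite_chain, T1.
Qed.

Lemma wf_transp_of_terminating_mod (R : relation A) :
  terminating_mod R E -> well_founded (transp A R).
Proof.
  intros T. apply wf_incl with (transp A (rel_mod R E)).
  - intros y x Rxy. exists x; split; [apply E_refl |]. exists y; split; [exact Rxy | apply E_refl].
  - apply wf_transp_of_no_infinite_chain, T.
Qed.

Section Refinement.
Variables R1 R2 : relation A.
Hypotheses (NF_incl : forall a, NF R2 a -> NF R1 a)
           (conv_incl : rincl R2 (conv_mod R1))
           (CR1 : CR_mod R1 E).

Lemma normalizes_refinement_E a n1 n2 :
  normalizes R1 a n1 -> normalizes R2 a n2 -> E n1 n2.
Proof.
  intros [Ran1 N1] [Ran2 N2]. apply (CR_mod_NF_E CR1); [exact N1 | apply NF_incl, N2 |].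
  apply rt_trans with a; [apply conv_mod_sym, conv_mod_rt, Ran1 |].
  apply (conv_mod_incl conv_incl), conv_mod_rt, Ran2.
Qed.

Lemma CR_mod_refinement : well_founded (transp A R2) -> CR_mod R2 E.
Proof.
  intros W2 a b Hab.
  destruct (normalizes_exists W2 a) as [na [Rana Na]].
  destruct (normalizes_exists W2 b) as [nb [Rbnb Nb]].
  exists na; split; [exact Rana |]. exists nb; split; [| exact Rbnb].
  apply (CR_mod_NF_E CR1); [apply NF_incl, Na | apply NF_incl, Nb |].
  apply (conv_mod_incl conv_incl).
  apply rt_trans with a; [apply conv_mod_sym, conv_mod_rt, Rana |].
  apply rt_trans with b; [exact Hab | apply conv_mod_rt, Rbnb].
Qed.

Lemma NE_mod_refinement :
  well_founded (transp A R1) -> well_founded (transp A R2) -> NE_mod R1 R2 E.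
Proof.
  intros W1 W2 a b; split.
  - intros [n1 [Hn1 En1b]]. destruct (normalizes_exists W2 a) as [n2 Hn2].
    exists n2; split; [exact Hn2 |].
    apply E_trans with n1; [apply E_sym, (normalizes_refinement_E Hn1 Hn2) | exact En1b].
  - intros [n2 [Hn2 En2b]]. destruct (normalizes_exists W1 a) as [n1 Hn1].
    exists n1; split; [exact Hn1 |].
    apply E_trans with n2; [apply (normalizes_refinement_E Hn1 Hn2) | exact En2b].
Qed.

End Refinement.
End Modulo.

Theorem lemma6p4 (A : Type) (R1 R2 E : relation A) :
  equivalence A E ->
  (forall a, NF R2 a -> NF R1 a) ->
  rincl R2 (clos_trans A (rel_mod R1 E)) ->
  complete_mod R1 E ->
  complete_mod R2 E /\ NE_mod R1 R2 E.
Proof.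
  intros [E_refl E_trans E_sym] NF_incl incl [T1 CR1].
  assert (conv_incl : rincl R2 (conv_mod E R1)).
  { intros a b Rab. apply conv_mod_of_rel_mod_plus, incl, Rab. }
  assert (T2 : terminating_mod R2 E) by exact (terminating_mod_incl E_trans incl T1).
  assert (W1 : well_founded (transp A R1)) by exact (wf_transp_of_terminating_mod E_refl T1).
  assert (W2 : well_founded (transp A R2)) by exact (wf_transp_of_terminating_mod E_refl T2).
  split; [split |].
  - exact T2.
  - exact (CR_mod_refinement E_sym NF_incl conv_incl CR1 W2).
  - exact (NE_mod_refinement E_sym E_trans NF_incl conv_incl CR1 W1 W2).
Qed.
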